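(* Let $N\ge2$ and $t>0$, and define, for $\boldsymbol{v}\in\mathbb{R}^N$ with pairwise distinct components, $$F_N(\boldsymbol{v},t)=\frac N2(N-1)(1-\log t)-\sum_{j=1}^Nj\log j+2\log|h_N(\boldsymbol{v})|-\frac{|\boldsymbol{v}|^2}{2t},\qquad h_N(\boldsymbol{v})=\prod_{1\le i<j\le N}(v_j-v_i).$$ Then the maximum value of $F_N(\cdot,t)$ is zero; in particular $F_N(\sqrt{2t}\,\rho\boldsymbol{z}_N,t)=0$ for every $\rho\in S_N$, where $\boldsymbol{z}_N$ is the vector of roots of the $N$-th Hermite polynomial $H_N(x)=(-1)^Ne^{x^2}\frac{d^N}{dx^N}e^{-x^2}$ and $\rho\boldsymbol{z}_N=(z_{\rho(1),N},\dots,z_{\rho(N),N})$. *)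

From HB Require Import structures.
From mathcomp Require Import all_boot all_order all_algebra all_fingroup.
From mathcomp Require Import all_classical all_reals all_analysis.
Set Implicit Arguments. Unset Strict Implicit. Unset Printing Implicit Defensive.
Import Order.TTheory GRing.Theory Num.Theory.
Local Open Scope ring_scope.

Definition hermite {R : realType} (N : nat) (x : R) : R :=
  (-1) ^+ N * expR (x ^+ 2) * derive1n N (fun y : R => expR (- y ^+ 2)) x.

Definition hN {R : realType} (N : nat) (v : 'I_N -> R) : R :=
  \prod_(i < N) \prod_(j < N | (i < j)%N) (v j - v i).

Definition sqnorm {R : realType} (N : nat) (v : 'I_N -> R) : R :=
  \sum_(i < N) v i ^+ 2.

Definition FN {R : realType} (N : nat) (v : 'I_N -> R) (t : R) : R :=
  N%:R / 2 * (N%:R - 1) * (1 - ln t)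
  - \sum_(1 <= j < N.+1) j%:R * ln (j%:R : R)
  + 2 * ln `|hN v|
  - sqnorm v / (2 * t).

From HB Require Import structures.
From mathcomp Require Import all_boot all_order all_algebra all_fingroup.
From mathcomp Require Import all_classical all_reals all_analysis.
From mathcomp Require Import polyrcf ring lra zify.
Import Order.TTheory GRing.Theory Num.Theory.
Local Open Scope ring_scope.
Set Implicit Arguments.
Unset Strict Implicit.
Unset Printing Implicit Defensive.

(** The Stieltjes relations [\sum_(j != i) 1 / (z_i - z_j) = z_i] satisfied by
    the roots of [H_N] (the ODE [H'' = 2 x H' - 2 N H] at a root) say that
    [u = sqrt(2t) (rho z)] is a critical point of
    [E(v) = ln \prod_(i != j) |v_i - v_j| - |v|^2 / (2t)].  For [v] ordered like
    [u], the bound [ln x <= x - 1] on the ratios [(v_i - v_j) / (u_i - u_j)],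
    combined with these relations and [|v|^2 - |u|^2 - 2 <v - u, u> >= 0], gives
    [E(v) <= E(u)].  The value [F_N(u, t) = 0] follows from [\sum_i z_i^2 = C(N, 2)]
    (again from the Stieltjes relations) and the discriminant formula
    [2^C(N, 2) \prod_(i != j) |z_i - z_j| = \prod_(k = 1..N) k^k], proved by induction
    on [N] through the interlacing of the roots of [H_N] and [H_(N+1)] and the
    recurrence [H_(N+1) = 2 x H_N - 2 N H_(N-1)]. *)

Lemma mul2_bin2 n : (2 * 'C(n, 2) = n * n.-1)%N.
Proof. by rewrite -mul_bin_diag bin1. Qed.

Section HermitePoly.
Variable R : numDomainType.

Fixpoint hermite_poly (n : nat) : {poly R} :=
  if n is m.+1 then 2 *: (hermite_poly m * 'X) - (hermite_poly m)^`() else 1.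

Local Notation H := hermite_poly.

Lemma hermite_polyS n : H n.+1 = 2 *: (H n * 'X) - (H n)^`().
Proof. by []. Qed.

Lemma deriv_hermite_polyS n : (H n.+1)^`() = (2 * n.+1%:R) *: H n.
Proof.
elim: n => [|n IH].
  by rewrite hermite_polyS derivB derivZ mul1r derivX -polyC1 derivC deriv0 subr0 mulr1.
rewrite hermite_polyS derivB derivZ derivM derivX IH !derivZ hermite_polyS.
rewrite -[n.+2%:R]natr1 -!mul_polyC !polyCM polyCD.
ring.
Qed.

Lemma hermite_polySS n : H n.+2 = 2 *: (H n.+1 * 'X) - (2 * n.+1%:R) *: H n.
Proof. by rewrite hermite_polyS deriv_hermite_polyS. Qed.

Lemma hermite_poly_ode n : (H n)^`()^`() = 2 *: ((H n)^`() * 'X) - (2 * n%:R) *: H n.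
Proof.
case: n => [|n].
  by rewrite /= -polyC1 derivC deriv0 mul0r scaler0 mulr0 scale0r subr0.
rewrite deriv_hermite_polyS derivZ hermite_polyS -!mul_polyC polyCM.
ring.
Qed.

Lemma size_hermite_poly n : size (H n) = n.+1.
Proof.
elim: n => [|n IH]; first by rewrite size_poly1.
have sX : size (2 *: (H n * 'X)) = n.+2.
  by rewrite size_scale ?pnatr_eq0 // size_mulX -?size_poly_eq0 IH.
rewrite hermite_polyS size_polyDl // size_polyN sX -IH ltnS ltnW // lt_size_deriv //.
by rewrite -size_poly_eq0 IH.
Qed.

Lemma lead_coef_hermite_poly n : lead_coef (H n) = 2 ^+ n.
Proof.
elim: n => [|n IH]; first by rewrite lead_coef1.
have H0 : H n != 0 by rewrite -size_poly_eq0 size_hermite_poly.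
rewrite hermite_polyS lead_coefDl ?lead_coefZ ?lead_coefMX ?IH ?exprS //.
rewrite size_polyN size_scale ?pnatr_eq0 // size_mulX // size_hermite_poly.
by rewrite (leq_trans (lt_size_deriv H0)) ?size_hermite_poly.
Qed.

End HermitePoly.

Section HermiteRodrigues.
Variable R : realType.

Let gauss (x : R) := expR (- x ^+ 2).

Lemma is_derive_gauss (x : R) : is_derive x 1 gauss (- 2 * x * gauss x).
Proof.
have -> : gauss = expR \o horner (- 'X ^+ 2).
  by apply/funext => y /=; rewrite hornerN hornerXn.
have := is_derive1_comp (is_derive_expR _) (is_derive_poly (- 'X ^+ 2) x).
rewrite /= !(hornerN, hornerXn, derivN, derivXn, hornerMn, hornerX) => D.
by apply: is_derive_eq D _; rewrite /gauss -mulr_natl; ring.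
Qed.

Lemma derive1_poly_gauss (p : {poly R}) :
  (fun y => p.[y] * gauss y)^`()%classic = (fun x => (p^`() - 2 *: ('X * p)).[x] * gauss x).
Proof.
apply/funext => x; rewrite derive1E.
have D : is_derive x 1 (fun y => p.[y] * gauss y) ((p^`().[x] - 2 * x * p.[x]) * gauss x).
  apply: trigger_derive (is_deriveM (is_derive_poly p x) (is_derive_gauss x)) _.
  by rewrite /GRing.scale /=; ring.
by rewrite derive_val !(hornerD, hornerN, hornerZ, hornerM, hornerX) mulrA.
Qed.

Lemma derive1n_gauss n :
  derive1n n gauss = (fun x => ((-1) ^+ n *: hermite_poly R n).[x] * gauss x).
Proof.
elim: n => [|n IH].
  by apply/funext => x; rewrite derive1n0 /= expr0 scale1r hornerC mul1r.
rewrite derive1nS IH derive1_poly_gauss; apply/funext => x; congr (_ * _).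
rewrite hermite_polyS !derivZ !(hornerD, hornerN, hornerZ, hornerM, hornerX) exprS.
ring.
Qed.

Lemma hermiteE n (x : R) : hermite n x = (hermite_poly R n).[x].
Proof.
rewrite /hermite derive1n_gauss hornerZ /gauss mulrACA -expRD addrN expR0 mulr1.
by rewrite mulrA -exprMn mulrNN mulr1 expr1n mul1r.
Qed.

End HermiteRodrigues.

Section ProdXsubC.
Variable F : fieldType.

Lemma poly_factor_roots n (p : {poly F}) (r : 'I_n -> F) :
  size p = n.+1 -> injective r -> (forall i, p.[r i] = 0) ->
  p = lead_coef p *: \prod_(i < n) ('X - (r i)%:P).
Proof.
move=> sp r_inj pr0.
have := @all_roots_prod_XsubC _ p [seq r i | i in 'I_n]; rewrite big_image; apply.
- by rewrite size_map size_enum_ord.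
- by apply/allP => _ /mapP [i _ ->]; rewrite /root pr0.
- by rewrite uniq_rootsE map_inj_uniq // enum_uniq.
Qed.

Lemma horner_deriv_prod_XsubC (I : Type) (s : seq I) (P : pred I) (c : I -> F) x :
  (forall i, P i -> x != c i) ->
  (\prod_(i <- s | P i) ('X - (c i)%:P))^`().[x] =
  (\prod_(i <- s | P i) (x - c i)) * \sum_(i <- s | P i) (x - c i)^-1.
Proof.
move=> xNc; elim: s => [|a s IH].
  by rewrite !big_nil derivC horner0 mulr0.
rewrite !big_cons; case: ifP => // Pa.
rewrite derivM hornerD !hornerM IH hornerXsubC horner_prod derivXsubC hornerC mul1r.
under eq_bigr => i _ do rewrite hornerXsubC.
have xa : x - c a != 0 by rewrite subr_eq0 xNc.
by field.
Qed.

Section AtRoot.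
Variables (n : nat) (r : 'I_n -> F) (k : 'I_n).
Hypothesis r_inj : injective r.

Let Q := \prod_(i | i != k) ('X - (r i)%:P).

Let prod_XsubC_split : \prod_(i < n) ('X - (r i)%:P) = ('X - (r k)%:P) * Q.
Proof. by rewrite (bigD1 k). Qed.

Let hornerQ : Q.[r k] = \prod_(i | i != k) (r k - r i).
Proof. by rewrite horner_prod; apply: eq_bigr => i _; rewrite hornerXsubC. Qed.

Lemma horner_deriv_prod_XsubC_root :
  (\prod_(i < n) ('X - (r i)%:P))^`().[r k] = \prod_(i | i != k) (r k - r i).
Proof.
rewrite prod_XsubC_split derivM derivXsubC mul1r hornerD hornerM hornerXsubC.
by rewrite subrr mul0r addr0 hornerQ.
Qed.

Lemma horner_deriv2_prod_XsubC_root :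
  (\prod_(i < n) ('X - (r i)%:P))^`()^`().[r k] =
  2 * \prod_(i | i != k) (r k - r i) * \sum_(i | i != k) (r k - r i)^-1.
Proof.
rewrite prod_XsubC_split derivM derivXsubC mul1r derivD derivM derivXsubC mul1r.
rewrite !(hornerD, hornerM, hornerN, hornerX, hornerC) subrr mul0r addr0.
rewrite horner_deriv_prod_XsubC => [|i ik].
  by rewrite -hornerQ; ring.
by apply: contra ik => /eqP /r_inj ->.
Qed.

End AtRoot.
End ProdXsubC.

Section OffDiagonal.
Variables (R : numFieldType) (N : nat).
Implicit Types (u v : 'I_N -> R) (rho : 'S_N).

Lemma big_offdiag_perm (op : SemiGroup.com_law R) (idx : R) rho (G : 'I_N -> R) i :
  \big[op/idx]_(j | j != i) G (rho j) = \big[op/idx]_(j | j != rho i) G j.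
Proof.
rewrite [RHS](reindex_inj (@perm_inj _ rho)); apply: eq_bigl => j.
by rewrite (inj_eq perm_inj).
Qed.

Lemma sum_offdiag_div_subr u v :
  \sum_i \sum_(j | j != i) (v i - v j) / (u i - u j) =
  2 * \sum_i v i * \sum_(j | j != i) (u i - u j)^-1.
Proof.
have split_ij i j : (v i - v j) / (u i - u j) = v i / (u i - u j) + v j / (u j - u i).
  by rewrite -(opprB (u i)) invrN; ring.
under eq_bigr => i _ do rewrite (eq_bigr _ (fun j _ => split_ij i j)) big_split /=.
rewrite big_split /= [X in _ + X](exchange_big_dep xpredT) //=.
under [X in _ + X]eq_bigr => i _ do under eq_bigl => j do rewrite eq_sym.
by rewrite -mulr2n mulr_natl; congr (_ *+ 2); apply: eq_bigr => i _; rewrite mulr_sumr.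
Qed.

Lemma prod_normr_horner_prod_XsubC m (x : 'I_m -> R) (y : 'I_N -> R) :
  \prod_i `|(\prod_j ('X - (y j)%:P)).[x i]| = \prod_j `|(\prod_i ('X - (x i)%:P)).[y j]|.
Proof.
under eq_bigr => i _ do rewrite horner_prod normr_prod.
under [RHS]eq_bigr => j _ do rewrite horner_prod normr_prod.
rewrite exchange_big; apply: eq_bigr => j _; apply: eq_bigr => i _.
by rewrite !hornerXsubC distrC.
Qed.

End OffDiagonal.

Lemma exists_perm_sorting (d : Order.disp_t) (T : orderType d) N (v : 'I_N -> T) :
  injective v -> exists rho : 'S_N, forall i j, (v i < v j)%O -> (rho i < rho j)%N.
Proof.
move=> v_inj; pose rank i := #|[set j | (v j < v i)%O]|.
have rank_mono i j : (v i < v j)%O -> (rank i < rank j)%N.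
  move=> vij; apply: proper_card; apply/properP; split.
    by apply/fintype.subsetP => k; rewrite !inE => /lt_trans; apply.
  by exists i; rewrite !inE ?vij ?ltxx.
have rank_lt i : (rank i < N)%N.
  rewrite -[N in (_ < N)%N]card_ord -cardsT; apply: proper_card; apply/properP.
  by split; [apply/fintype.subsetP | exists i; rewrite ?inE ?ltxx].
have rank_inj : injective (fun i => Ordinal (rank_lt i)).
  move=> i j /(congr1 val) /= eq_rank; apply: v_inj.
  by case: (ltgtP (v i) (v j)) => // /rank_mono; rewrite eq_rank ltnn.
by exists (perm rank_inj) => i j /rank_mono; rewrite !permE.
Qed.

Section Discriminant.
Variables (R : realType) (N : nat).
Implicit Types (v z : 'I_N -> R) (rho : 'S_N).

Definition disc v := \prod_i \prod_(j | j != i) `|v i - v j|.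

Lemma disc_gt0 v : injective v -> 0 < disc v.
Proof.
move=> v_inj; apply: prodr_gt0 => i _; apply: prodr_gt0 => j ji.
by rewrite normr_gt0 subr_eq0; apply: contra ji => /eqP /v_inj ->.
Qed.

Lemma disc_scale_perm (s : R) z rho :
  disc (fun i => s * z (rho i)) = `|s| ^+ (N * N.-1) * disc z.
Proof.
rewrite /disc.
under eq_bigr => i _ do under eq_bigr => j _ do rewrite -mulrBr normrM.
under eq_bigr => i _ do rewrite big_split /= prodr_const cardC1 card_ord.
rewrite big_split /= prodr_const card_ord -exprM mulnC; congr (_ * _).
rewrite [RHS](reindex_inj (@perm_inj _ rho)); apply: eq_bigr => i _.
exact: (big_offdiag_perm _ _ rho (fun j => `|z (rho i) - z j|)).
Qed.

Lemma sqr_normr_hN v : `|hN v| ^+ 2 = disc v.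
Proof.
rewrite /hN /disc normr_prod expr2.
under [RHS]eq_bigr => i _ do rewrite (bigID (fun j : 'I_N => (i < j)%N)) /=.
rewrite big_split /=.
congr (_ * _); first apply: eq_bigr => i _.
  rewrite normr_prod; apply: eq_big => [j|j _]; last by rewrite distrC.
  by rewrite andb_idl // => ij; apply: contraTneq ij => ->; rewrite ltnn.
rewrite (exchange_big_dep xpredT) //=; apply: eq_bigr => i _.
rewrite normr_prod; apply: eq_bigl => j /=.
by rewrite -leqNgt ltn_neqAle.
Qed.

End Discriminant.

Section Log.
Variable R : realType.

Lemma ln_prod (I : Type) (r : seq I) (P : pred I) (F : I -> R) :
  (forall i, P i -> 0 < F i) -> ln (\prod_(i <- r | P i) F i) = \sum_(i <- r | P i) ln (F i).
Proof.
move=> F_gt0; suff [] : 0 < \prod_(i <- r | P i) F i /\ ln (\prod_(i <- r | P i) F i) =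
                           \sum_(i <- r | P i) ln (F i) by [].
elim/big_rec2: _ => [|i y p Pi [p_gt0 lnp]]; first by rewrite ln1.
by rewrite mulr_gt0 ?F_gt0 // lnM ?posrE ?F_gt0 // lnp.
Qed.

Lemma ln_le_subr1 (x : R) : 0 < x -> ln x <= x - 1.
Proof. by move=> x_gt0; rewrite -[x in ln x](subrKC 1) le_ln1Dx // ltrBrDl addrN. Qed.

End Log.

Section HermiteRoots.
Variable R : realType.
Local Notation H n := (hermite_poly R n).

Lemma hermite_poly_factor n (z : 'I_n -> R) :
  injective z -> (forall i, (H n).[z i] = 0) ->
  H n = 2 ^+ n *: \prod_(i < n) ('X - (z i)%:P).
Proof.
move=> z_inj z0.
by rewrite {1}(poly_factor_roots (size_hermite_poly R n) z_inj z0) lead_coef_hermite_poly.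
Qed.

Lemma prod_subr_neq0 n (z : 'I_n -> R) k :
  injective z -> \prod_(i | i != k) (z k - z i) != 0.
Proof.
move=> z_inj; rewrite prodf_seq_neq0; apply/allP => i _; apply/implyP => ik.
by rewrite subr_eq0; apply: contra ik => /eqP /z_inj ->.
Qed.

Lemma hermite_roots_stieltjes n (z : 'I_n -> R) :
  injective z -> (forall i, (H n).[z i] = 0) ->
  forall k, \sum_(i | i != k) (z k - z i)^-1 = z k.
Proof.
move=> z_inj z0 k.
have := congr1 (horner^~ (z k)) (hermite_poly_ode R n).
rewrite /= hornerD hornerN !hornerZ hornerMX z0 mulr0 subr0 (hermite_poly_factor z_inj z0).
rewrite !derivZ !hornerZ horner_deriv2_prod_XsubC_root // horner_deriv_prod_XsubC_root //.
set P := \prod_(i | i != k) _; set S := \sum_(i | i != k) _ => e.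
have two : (2 : R) != 0 by rewrite pnatr_eq0.
have nz : 2 * 2 ^+ n * P != 0 by rewrite !mulf_neq0 ?expf_neq0 ?prod_subr_neq0.
apply: (mulfI nz); transitivity (2 ^+ n * (2 * P * S)); first by ring.
by rewrite e; ring.
Qed.

Lemma exists_hermite_roots_pred n (r : 'I_n.+1 -> R) :
  {homo r : i j / (i < j)%N >-> i < j} -> (forall i, (H n.+1).[r i] = 0) ->
  exists2 y : 'I_n -> R, {homo y : i j / (i < j)%N >-> i < j} & forall i, (H n).[y i] = 0.
Proof.
move=> r_incr r0.
have /fin_all_exists2 [y y_in y0] i : exists2 c,
    c \in `]r (widen_ord (leqnSn n) i), r (lift ord0 i)[ & (H n).[c] = 0.
  have lt_r : r (widen_ord (leqnSn n) i) < r (lift ord0 i) by apply: r_incr.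
  have [c c_in] := poly_rolle lt_r (etrans (r0 _) (esym (r0 _))).
  rewrite deriv_hermite_polyS hornerZ => /eqP; rewrite !mulf_eq0 !pnatr_eq0 /= => /eqP.
  by exists c.
have r_le (k l : 'I_n.+1) : (k <= l)%N -> r k <= r l.
  by rewrite leq_eqVlt => /predU1P [/val_inj -> //|/r_incr/ltW].
exists y => // i j ij; have /andP [_ yi_lt] := y_in i; have /andP [yj_gt _] := y_in j.
apply: (lt_le_trans yi_lt); apply: le_trans (ltW yj_gt).
exact: (r_le (lift ord0 i) (widen_ord (leqnSn n) j)).
Qed.

Lemma prod_normr_hermite_at_roots_succ n (r : 'I_n.+1 -> R) :
  {homo r : i j / (i < j)%N >-> i < j} -> (forall i, (H n.+1).[r i] = 0) ->
  \prod_i `|(H n).[r i]| = \prod_(k < n.+1) (2 * k%:R) ^+ k.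
Proof.
elim: n r => [|n IH] r r_incr r0; first by rewrite !big_ord1 hornerC normr1.
have [y y_incr y0] := exists_hermite_roots_pred r_incr r0.
have -> : \prod_i `|(H n.+1).[r i]| = \prod_k `|(H n.+2).[y k]|.
  rewrite (hermite_poly_factor (inc_inj (le_mono y_incr)) y0).
  rewrite (hermite_poly_factor (inc_inj (le_mono r_incr)) r0).
  under eq_bigr => i _ do rewrite hornerZ normrM.
  under [RHS]eq_bigr => i _ do rewrite hornerZ normrM.
  rewrite !prodrMl !cardT !size_enum_ord !normrX -!exprM mulnC.
  by rewrite prod_normr_horner_prod_XsubC.
under eq_bigr => k _ do
  rewrite hermite_polySS hornerD hornerN !hornerZ hornerMX y0 mul0r mulr0 sub0r normrN
          !normrM !normr_nat.
by rewrite prodrMl cardT size_enum_ord IH // [RHS]big_ord_recr mulrC.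
Qed.

Lemma disc_hermite_rootsS n (z : 'I_n.+1 -> R) :
  {homo z : i j / (i < j)%N >-> i < j} -> (forall i, (H n.+1).[z i] = 0) ->
  disc z * 2 ^+ (n.+1 * n.+1) = \prod_(k < n.+2) (2 * k%:R) ^+ k.
Proof.
move=> z_incr z0; have z_inj := inc_inj (le_mono z_incr).
transitivity (\prod_k `|(H n.+1)^`().[z k]|).
  rewrite (hermite_poly_factor z_inj z0) derivZ.
  under eq_bigr => k _ do rewrite hornerZ horner_deriv_prod_XsubC_root // normrM normr_prod.
  by rewrite prodrMl cardT size_enum_ord normrX -exprM ger0_norm // mulrC.
under eq_bigr => k _ do rewrite deriv_hermite_polyS hornerZ !normrM !normr_nat.
rewrite prodrMl cardT size_enum_ord prod_normr_hermite_at_roots_succ //.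
by rewrite [RHS]big_ord_recr mulrC.
Qed.

Lemma disc_hermite_roots N (z : 'I_N -> R) :
  {homo z : i j / (i < j)%N >-> i < j} -> (forall i, (H N).[z i] = 0) ->
  disc z * 2 ^+ 'C(N, 2) = \prod_(1 <= k < N.+1) k%:R ^+ k.
Proof.
case: N z => [|n] z z_incr z0; first by rewrite /disc big_ord0 big_geq // mulr1.
have split2 : \prod_(k < n.+2) (2 * k%:R) ^+ k =
    2 ^+ 'C(n.+2, 2) * \prod_(1 <= k < n.+2) k%:R ^+ k :> R.
  rewrite (eq_bigr (fun k : 'I_n.+2 => 2 ^+ k * k%:R ^+ k)) => [|k _]; last exact: exprMn.
  rewrite big_split /= prodrXr -(big_mkord xpredT (fun k => k)) bin2_sum.
  by rewrite -(big_mkord xpredT (fun k => k%:R ^+ k)) big_ltn // expr0 mul1r.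
have := disc_hermite_rootsS z_incr z0; rewrite split2.
have -> : (n.+1 * n.+1 = 'C(n.+1, 2) + 'C(n.+2, 2))%N.
  have := mul2_bin2 n.+1; rewrite [X in (_ = _ + X)%N]binS bin1; nia.
have two_pow_neq0 : (2 : R) ^+ 'C(n.+2, 2) != 0 by rewrite expf_neq0 ?pnatr_eq0.
by rewrite exprD mulrA mulrC => /(mulfI two_pow_neq0).
Qed.

Lemma sum_sqr_hermite_roots N (z : 'I_N -> R) :
  injective z -> (forall i, (H N).[z i] = 0) -> \sum_i z i ^+ 2 = 'C(N, 2)%:R.
Proof.
move=> z_inj z0; have two : (2 : R) != 0 by rewrite pnatr_eq0.
apply: (mulfI two); transitivity (2 * \sum_i z i * \sum_(j | j != i) (z i - z j)^-1).
  by congr (_ * _); apply: eq_bigr => i _; rewrite (hermite_roots_stieltjes z_inj z0).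
rewrite -sum_offdiag_div_subr (eq_bigr (fun=> N.-1%:R)) => [|i _].
  by rewrite sumr_const card_ord -mulrnA mulnC -mul2_bin2 natrM.
rewrite (eq_bigr (fun=> 1)) ?sumr_const ?cardC1 ?card_ord // => j ji.
by rewrite divff // subr_eq0; apply: contra ji => /eqP /z_inj ->.
Qed.

Lemma ln_disc_hermite_roots N (z : 'I_N -> R) :
  {homo z : i j / (i < j)%N >-> i < j} -> (forall i, (H N).[z i] = 0) ->
  ln (disc z) = \sum_(1 <= k < N.+1) k%:R * ln k%:R - 'C(N, 2)%:R * ln 2.
Proof.
move=> z_incr z0; have /(congr1 (@ln R)) := disc_hermite_roots z_incr z0.
rewrite lnM ?posrE ?exprn_gt0 ?disc_gt0 //; last exact: inc_inj (le_mono z_incr).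
rewrite [ln (2 ^+ _)]lnXn // [ln (\prod_(_ <= _ < _) _)]ln_prod => [e|k _].
  rewrite -[ln (disc z)](addrK ('C(N, 2)%:R * ln 2)) mulr_natl e; congr (_ - _).
  by apply: eq_big_nat => k /andP [k_gt0 _]; rewrite lnXn ?ltr0n // mulr_natl.
by case: k => [|k]; rewrite ?expr0 ?exprn_gt0.
Qed.

End HermiteRoots.

Section LogGas.
Variables (R : realType) (N : nat).
Implicit Types (u v : 'I_N -> R).

Lemma ln_disc_sub_le u v :
  injective u -> injective v -> (forall i j, v i < v j -> u i < u j) ->
  ln (disc v) - ln (disc u) <= 2 * \sum_i (v i - u i) * \sum_(j | j != i) (u i - u j)^-1.
Proof.
move=> u_inj v_inj uv.
have du i j : j != i -> u i - u j != 0.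
  by move=> ji; rewrite subr_eq0; apply: contra ji => /eqP /u_inj ->.
have ratio_gt0 i j : j != i -> 0 < (v i - v j) / (u i - u j).
  move=> ji; case: (ltgtP (v i) (v j)) => [vij|vij|/v_inj eij].
  - by rewrite -(opprB (v j)) -(opprB (u j)) invrN mulrNN divr_gt0 ?subr_gt0 ?(uv _ _ vij).
  - by rewrite divr_gt0 ?subr_gt0 ?(uv _ _ vij).
  - by rewrite eij eqxx in ji.
have ratio_prod_gt0 : 0 < \prod_i \prod_(j | j != i) ((v i - v j) / (u i - u j)).
  by apply: prodr_gt0 => i _; apply: prodr_gt0 => j; apply: ratio_gt0.
have -> : disc v = (\prod_i \prod_(j | j != i) ((v i - v j) / (u i - u j))) * disc u.
  rewrite /disc -big_split /=; apply: eq_bigr => i _; rewrite -big_split /=.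
  apply: eq_bigr => j ji.
  by rewrite -(gtr0_norm (ratio_gt0 _ _ ji)) -normrM divfK ?du.
rewrite lnM ?posrE ?disc_gt0 // addrK -(sum_offdiag_div_subr u (fun i => v i - u i)).
rewrite ln_prod => [|i _]; last by apply: prodr_gt0 => j; apply: ratio_gt0.
apply: ler_sum => i _; rewrite ln_prod => [|j]; last exact: ratio_gt0.
apply: ler_sum => j ji.
have -> : (v i - u i - (v j - u j)) / (u i - u j) = (v i - v j) / (u i - u j) - 1.
  by field; apply: du.
exact: ln_le_subr1 (ratio_gt0 _ _ ji).
Qed.

Lemma ln_disc_sub_sqnorm_le (c : R) u v :
  0 < c -> injective u -> injective v -> (forall i j, v i < v j -> u i < u j) ->
  (forall i, \sum_(j | j != i) (u i - u j)^-1 = u i / c) ->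
  ln (disc v) - sqnorm v / c <= ln (disc u) - sqnorm u / c.
Proof.
move=> c_gt0 u_inj v_inj uv crit.
have := ln_disc_sub_le u_inj v_inj uv.
under eq_bigr => i _ do rewrite crit mulrA.
rewrite -mulr_suml.
have : 0 <= \sum_i (v i - u i) ^+ 2 by apply: sumr_ge0 => i _; apply: sqr_ge0.
have -> : \sum_i (v i - u i) ^+ 2 = sqnorm v - sqnorm u - 2 * \sum_i (v i - u i) * u i.
  by rewrite /sqnorm mulr_sumr -!sumrB; apply: eq_bigr => i _; ring.
rewrite subr_ge0 => sq; rewrite mulrA.
have : 2 * (\sum_i (v i - u i) * u i) / c <= sqnorm v / c - sqnorm u / c.
  by rewrite -mulrBl ler_pM2r ?invr_gt0.
lra.
Qed.

End LogGas.

Section FN.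
Variable R : realType.

Lemma ln_normr_hN N (v : 'I_N -> R) : 2 * ln `|hN v| = ln (disc v).
Proof.
rewrite -sqr_normr_hN; have [->|hN_neq0] := eqVneq `|hN v| 0.
  by rewrite expr0n /= ln0 // mulr0.
by rewrite lnXn ?lt_def ?hN_neq0 ?normr_ge0 //; ring.
Qed.

Lemma sqnorm_scale_perm N (s : R) (z : 'I_N -> R) (rho : 'S_N) :
  sqnorm (fun i => s * z (rho i)) = s ^+ 2 * sqnorm z.
Proof.
rewrite /sqnorm mulr_sumr [RHS](reindex_inj (@perm_inj _ rho)).
by apply: eq_bigr => i _; rewrite exprMn.
Qed.

Lemma FNE N (v : 'I_N -> R) t :
  FN v t = 'C(N, 2)%:R * (1 - ln t) - \sum_(1 <= j < N.+1) j%:R * ln j%:R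
           + ln (disc v) - sqnorm v / (2 * t).
Proof.
rewrite /FN ln_normr_hN; congr (_ * _ - _ + _ - _).
case: N v => [|n] _; first by rewrite !mul0r.
have -> : n.+1%:R - 1 = n%:R :> R by rewrite -natr1 addrK.
by rewrite mulrAC -natrM -mul2_bin2 natrM mulrAC divff ?mul1r ?pnatr_eq0.
Qed.

Section HermiteCriticalPoint.
Variables (N : nat) (t : R) (z : 'I_N -> R).
Hypotheses (t_gt0 : 0 < t) (z_incr : {homo z : i j / (i < j)%N >-> i < j})
  (z0 : forall i, (hermite_poly R N).[z i] = 0).

Let s := Num.sqrt (2 * t).
Let s_gt0 : 0 < s. Proof. by rewrite sqrtr_gt0 mulr_gt0. Qed.
Let sqr_s : s ^+ 2 = 2 * t. Proof. by rewrite sqr_sqrtr // mulr_ge0 // ltW. Qed.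
Let z_inj : injective z. Proof. exact: inc_inj (le_mono z_incr). Qed.

Lemma FN_scaled_hermite_roots_eq0 (rho : 'S_N) : FN (fun i => s * z (rho i)) t = 0.
Proof.
rewrite FNE disc_scale_perm sqnorm_scale_perm gtr0_norm // -mul2_bin2 exprM sqr_s.
rewrite lnM ?posrE ?exprn_gt0 ?disc_gt0 ?mulr_gt0 // lnXn ?mulr_gt0 // lnM ?posrE //.
rewrite ln_disc_hermite_roots // /sqnorm sum_sqr_hermite_roots // -mulr_natl.
by field; apply: lt0r_neq0.
Qed.

Lemma FN_le0 (v : 'I_N -> R) : injective v -> FN v t <= 0.
Proof.
move=> v_inj; have [rho rho_sort] := exists_perm_sorting v_inj.
pose u i := s * z (rho i).
have u_inj : injective u.
  by move=> i j /(mulfI (lt0r_neq0 s_gt0)) /z_inj /perm_inj.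
have uv i j : v i < v j -> u i < u j.
  by move=> /rho_sort /z_incr; rewrite ltr_pM2l.
have crit i : \sum_(j | j != i) (u i - u j)^-1 = u i / (2 * t).
  under eq_bigr => j _ do rewrite -mulrBr invfM.
  rewrite -mulr_sumr (big_offdiag_perm _ _ rho (fun j => (z (rho i) - z j)^-1)).
  rewrite hermite_roots_stieltjes // -sqr_s /u; field; exact: lt0r_neq0.
have two_t_gt0 : 0 < 2 * t by rewrite mulr_gt0.
have := ln_disc_sub_sqnorm_le two_t_gt0 u_inj v_inj uv crit.
rewrite -(FN_scaled_hermite_roots_eq0 rho) !FNE; lra.
Qed.

End HermiteCriticalPoint.
End FN.

Theorem lemma2 (R : realType) (N : nat) (t : R) (z : 'I_N -> R) :
  (2 <= N)%N -> 0 < t ->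
  (forall i j : 'I_N, (i < j)%N -> z i < z j) ->
  (forall i : 'I_N, hermite N (z i) = 0) ->
  (forall v : 'I_N -> R, injective v -> FN v t <= 0) /\
  (forall rho : 'S_N, FN (fun i => Num.sqrt (2 * t) * z (rho i)) t = 0).
Proof.
(* The argument works for every [N]. *)
move=> _ t_gt0 z_incr hermite_z0.
have z0 i : (hermite_poly R N).[z i] = 0 by rewrite -hermiteE.
split; [exact: FN_le0 t_gt0 z_incr z0 | exact: FN_scaled_hermite_roots_eq0 t_gt0 z_incr z0].
Qed.
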